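(* In the manifold decomposition game, the Grundy value of the position consisting of the single surface $og$ is $G(o0)=0$, $G(o1)=1$, and for $g\ge 2$, $G(og)=2$ if $g$ is even and $G(og)=0$ if $g$ is odd. (In the paper's notation, the $G$-series of $og$ is $01\dot{2}\dot{0}$.)
   Context: Notation: $og$ is the closed orientable surface of genus $g$ (connected sum of $g$ tori), with $o0$ the sphere. The manifold decomposition game: a position is a finite disjoint union of compact connected surfaces without boundary. Two players alternate moves. A move consists of choosing one component $S$ and performing a proper decomposition of it: choose an essential simple closed curve $J$ on $S$ (not null-homotopic, equivalently not bounding a disk in $S$), take a tubular neighborhood of $J$ (an annulus or a Möbius band), remove its interior, and cap off each resulting boundary circle with a disk; $S$ is replaced by the resulting one or two surfaces. The game ends when every component is a sphere, and the last player able to move wins. The Grundy value $G$ of a position is defined recursively: a position with no moves has value $0$, and otherwise the value is the minimal excluded nonnegative integer (mex) of the values of positions reachable in one move. The $G$-series lists $G(o0),G(o1),G(o2),\dots$; dots over digits indicate a repeating block. *)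

From mathcomp Require Import all_boot.
Set Implicit Arguments. Unset Strict Implicit. Unset Printing Implicit Defensive.

(* A closed orientable surface o_g is represented by its genus g; a position
   (finite disjoint union of such surfaces) by the list of genera of its
   components (order irrelevant). *)
Definition position := seq nat.

(* Results of a proper decomposition of o_g along an essential simple closed
   curve J:
   - J non-separating (exists iff g >= 1): result o_(g-1);
   - J separating and essential (exists iff g >= 2): result o_a + o_(g-a),
     with 1 <= a <= g-1 (every such split is realised).
   The sphere o_0 has no essential curve. *)
Definition pieces (g : nat) : seq position :=
  if g is g'.+1 then [:: g'] :: [seq [:: a; g - a] | a <- iota 1 g'] else [::].

Definition moves (p : position) : seq position :=
  flatten [seq [seq take i p ++ r ++ drop i.+1 p | r <- pieces (nth 0 p i)]
          | i <- iota 0 (size p)].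

Definition mex (s : seq nat) : nat :=
  find (fun n => n \notin s) (iota 0 (size s).+1).

Fixpoint grundy_fuel (fuel : nat) (p : position) : nat :=
  if fuel is f.+1 then mex [seq grundy_fuel f q | q <- moves p] else 0.

(* Strictly decreasing measure along moves: sum of (2g-1) over components of
   positive genus; so fuel (measure p).+1 is enough for the full recursion. *)
Definition measure (p : position) : nat := sumn [seq (g.*2).-1 | g <- p].

Definition grundy (p : position) : nat := grundy_fuel (measure p).+1 p.

(* The Grundy value of every position is b1 + 2 b2, where b1 is the parity of
   the number of genus-one components and b2 that of the number of components
   of even genus g >= 2: the nim-sum of the values 1 of o1, 2 of o_2k and 0 of
   all other surfaces.  This is checked against the mex recursion: every
   decomposition of a single surface changes (b1, b2), and every smaller value
   is reached by cutting a torus into a sphere, o2 into o1 + o1 or o1, or o_g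
   (g >= 4 even) into o_(g-1) or o1 + o_(g-1). *)
From mathcomp Require Import all_boot.
From mathcomp Require Import zify.
Set Implicit Arguments. Unset Strict Implicit.

Lemma mex_eq s n : n \notin s -> {subset iota 0 n <= s} -> mex s = n.
Proof.
move=> sNn below_n.
have le_n_size : n <= size s by rewrite -(size_iota 0 n) uniq_leq_size ?iota_uniq.
rewrite /mex -(subnKC (leqW le_n_size)) iotaD find_cat size_iota add0n.
have -> : has (fun k => k \notin s) (iota 0 n) = false.
  by apply/hasP=> -[k /below_n ->].
by rewrite subSn //= sNn addn0.
Qed.

Definition splice (p : position) i (r : position) : position :=
  take i p ++ r ++ drop i.+1 p.

Lemma movesP p q :
  reflect (exists i r, [/\ i < size p, r \in pieces (nth 0 p i) & q = splice p i r])
          (q \in moves p).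
Proof.
apply: (iffP flattenP) => [[s /mapP[i]] | [i [r [lt_i_p r_piece ->]]]].
  by rewrite mem_iota => lt_i_p -> /mapP[r r_piece ->]; exists i, r.
exists [seq splice p i r0 | r0 <- pieces (nth 0 p i)]; last exact: map_f.
by apply: map_f; rewrite mem_iota.
Qed.

Lemma sumn_map_splice (f : nat -> nat) p i r : i < size p ->
  sumn (map f (splice p i r)) + f (nth 0 p i) = sumn (map f p) + sumn (map f r).
Proof.
move=> lt_i_p; rewrite -[in RHS](cat_take_drop i p) (drop_nth 0 lt_i_p).
rewrite !map_cat !sumn_cat /=; lia.
Qed.

Lemma measure_pieces g r : r \in pieces g -> measure r < (g.*2).-1.
Proof.
case: g => [|g] //=; rewrite in_cons => /predU1P[-> | /mapP[a]].
  by rewrite /measure /=; lia.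
by rewrite mem_iota => a_range ->; rewrite /measure /=; lia.
Qed.

Lemma measure_moves p q : q \in moves p -> measure q < measure p.
Proof.
case/movesP=> i [r [lt_i_p /measure_pieces lt_r ->]].
have := sumn_map_splice (fun g => (g.*2).-1) r lt_i_p.
rewrite -/(measure _) -/(measure p) -/(measure r); lia.
Qed.

Definition genus_one : pred nat := pred1 1.
Definition even_genus : pred nat := fun g => (1 < g) && ~~ odd g.

Definition parities (p : position) : bool * bool :=
  (odd (count genus_one p), odd (count even_genus p)).

Definition addb2 (b c : bool * bool) : bool * bool := (b.1 (+) c.1, b.2 (+) c.2).

Definition nat_of_bits (b : bool * bool) : nat := b.1 + 2 * b.2.

Definition value (p : position) : nat := nat_of_bits (parities p).

Lemma nat_of_bits_inj : injective nat_of_bits.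
Proof. by move=> [[] []] [[] []]. Qed.

Lemma addb2_cancel b c d : addb2 (addb2 b c) d = b -> d = c.
Proof. by move: b c d => [[] []] [[] []] [[] []]. Qed.

Lemma odd_count_splice (a : pred nat) p i r : i < size p ->
  odd (count a (splice p i r)) = odd (count a p) (+) a (nth 0 p i) (+) odd (count a r).
Proof.
move=> lt_i_p; have := congr1 odd (sumn_map_splice a r lt_i_p).
rewrite !sumn_count !oddD oddb.
by case: (odd (count a (splice p i r))); case: (a _); case: (odd (count a p));
   case: (odd (count a r)).
Qed.

Lemma parities_splice p i r : i < size p ->
  parities (splice p i r) = addb2 (addb2 (parities p) (parities [:: nth 0 p i])) (parities r).
Proof.
by move=> lt_i_p; rewrite /parities /addb2 /= !odd_count_splice // !addn0 !oddb.
Qed.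

Lemma parities_cut g : parities [:: g] != parities [:: g.+1].
Proof.
rewrite /parities /even_genus /=; case: g => [|[|g]] //=.
by rewrite !addn0; case: (odd g).
Qed.

Lemma parities_split a b : 0 < a -> 0 < b -> parities [:: a; b] != parities [:: a + b].
Proof.
rewrite /parities /genus_one /even_genus /=.
case: a b => [|[|a]] [|[|b]] //= _ _; rewrite ?addn0 ?addnS ?addSn //= ?oddD;
  by case: (odd a); case: (odd b).
Qed.

Lemma parities_pieces g r : r \in pieces g -> parities r != parities [:: g].
Proof.
case: g => [|g] //=; rewrite in_cons => /predU1P[-> | /mapP[a]].
  exact: parities_cut.
rewrite mem_iota add1n => /andP[a_pos lt_a_g] ->.
by rewrite -[in [:: g.+1]](subnKC (ltnW lt_a_g)) parities_split // subn_gt0.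
Qed.

Lemma move_parities p i r : i < size p -> r \in pieces (nth 0 p i) ->
  exists2 q, q \in moves p &
    parities q = addb2 (addb2 (parities p) (parities [:: nth 0 p i])) (parities r).
Proof.
move=> lt_i_p r_piece; exists (splice p i r); last exact: parities_splice.
by apply/movesP; exists i, r.
Qed.

Lemma value_moves_neq p q : q \in moves p -> value q != value p.
Proof.
case/movesP=> i [r [lt_i_p r_piece ->]]; apply: contraNN (parities_pieces r_piece).
by rewrite /value parities_splice // => /eqP/nat_of_bits_inj/addb2_cancel ->.
Qed.

Lemma odd_count_nth (a : pred nat) p :
  odd (count a p) -> exists2 i, i < size p & a (nth 0 p i).
Proof.
by move=> odd_count; apply/has_nthP; rewrite has_count; case: (count a p) odd_count.
Qed.

Lemma parities_even_genus g : even_genus g -> parities [:: g] = (false, true).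
Proof. by case: g => [|[|g]] // even_g; rewrite /parities /= even_g. Qed.

Lemma even_genus_pieces g : even_genus g ->
  exists r0 r1, [/\ r0 \in pieces g, parities r0 = (false, false),
                    r1 \in pieces g & parities r1 = (true, false)].
Proof.
case: g => [|[|[|[|g]]]] //; first by exists [:: 1; 1], [:: 1].
rewrite /even_genus /= !negbK => even_g; exists [:: g.+3], [:: 1; g.+3].
rewrite /parities /even_genus /= !negbK (negbTE even_g) mem_head subn1.
by split=> //; rewrite !in_cons eqxx orbT.
Qed.

Lemma value_moves_below p m : m < value p -> exists2 q, q \in moves p & value q = m.
Proof.
have one_move : (parities p).1 ->
    exists2 q, q \in moves p & parities q = addb2 (parities p) (true, false).
  case/odd_count_nth=> j lt_j_p /eqP nth_j.
  have [|q move_q Pq] := @move_parities p j [:: 0] lt_j_p; first by rewrite nth_j.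
  by exists q; rewrite // Pq nth_j; case: (parities p) => [[] []].
have two_moves b : (parities p).2 ->
    exists2 q, q \in moves p & parities q = addb2 (parities p) (b, true).
  case/odd_count_nth=> i lt_i_p /[dup] /parities_even_genus even_i.
  case/even_genus_pieces=> r0 [r1 [r0_piece P0 r1_piece P1]].
  case: b; [have [q move_q Pq] := move_parities lt_i_p r1_piece |
            have [q move_q Pq] := move_parities lt_i_p r0_piece];
  by exists q; rewrite // Pq even_i ?P0 ?P1; case: (parities p) => [[] []].
rewrite /value; case: (parities p) one_move two_moves => [[] []] /= one two;
  case: m => [|[|[|m]]] //= _.
all: first [ by have [q ? Pq] := one isT; exists q; rewrite // /value Pq
           | by have [q ? Pq] := two false isT; exists q; rewrite // /value Pq
           | by have [q ? Pq] := two true isT; exists q; rewrite // /value Pq ].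
Qed.

Lemma grundy_fuel_value f p : measure p < f -> grundy_fuel f p = value p.
Proof.
elim: f p => [|f IH] p // lt_p_f /=.
have -> : [seq grundy_fuel f q | q <- moves p] = [seq value q | q <- moves p].
  by apply/eq_in_map => q /measure_moves lt_q_p; apply/IH/(leq_trans lt_q_p).
apply: mex_eq.
  by apply/mapP=> -[q /value_moves_neq/eqP neq_qp eq_pq]; apply: neq_qp.
move=> m; rewrite mem_iota => /andP[_ lt_m_p].
by have [q move_q <-] := value_moves_below lt_m_p; apply: map_f.
Qed.

Theorem theorem2p3 (g : nat) :
  grundy [:: g] =
    if g == 0 then 0
    else if g == 1 then 1
    else if odd g then 0 else 2.
Proof.
rewrite /grundy grundy_fuel_value // /value /parities /even_genus /=.
by case: g => [|[|g]] //=; rewrite !addn0; case: (odd g).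
Qed.
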